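(* Let $G$ be a graph that has at least one pair of distinct twin vertices and at least one isolated vertex, and let $T$ be a minimum twin cover of $G$. Then for every $t\ge1$, \[\det(\mu_t(G))=t|T|+\det(G)+t-1.\]
   Context: All graphs are finite and simple. For a graph $G$ with $V(G)=\{v_1,\dots,v_n\}$ and an integer $t\ge1$, the generalized Mycielskian $\mu_t(G)$ has vertex set $\{u_i^s: 1\le i\le n,\ 0\le s\le t\}\cup\{w\}$, where $u_i^0$ is identified with $v_i$. Its edges are: $u_i^0u_j^0$ for each edge $v_iv_j$ of $G$; $u_i^su_j^{s+1}$ and $u_j^su_i^{s+1}$ for each edge $v_iv_j$ of $G$ and each $0\le s<t$; and $u_i^tw$ for all $1\le i\le n$. A set $S\subseteq V(G)$ is a determining set for $G$ if the only automorphism of $G$ fixing every vertex of $S$ is the identity; $\det(G)$ is the minimum size of a determining set. Two vertices are twins if they have the same open neighborhood. A minimum twin cover of a graph is a subset of its vertices of minimum size that contains at least one vertex from every pair of distinct twin vertices; equivalently, it contains all but one vertex of each class of mutually twin vertices. *)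

From mathcomp Require Import all_boot fingroup perm.
Set Implicit Arguments. Unset Strict Implicit. Unset Printing Implicit Defensive.

Section Graphs.
Variable V : finType.
Variable e : rel V.

Definition simple_graph : Prop := symmetric e /\ irreflexive e.

Definition is_aut (p : {perm V}) : bool :=
  [forall x, forall y, e (p x) (p y) == e x y].

Definition determining (S : {set V}) : bool :=
  [forall p : {perm V}, is_aut p ==> [forall x in S, p x == x] ==> (p == 1%g)].

(* det(G) = minimum size of a determining set (setT is always determining) *)
Definition det_number : nat :=
  #|[arg min_(S < [set: V] | determining S) #|S|]|.

Definition twins (u v : V) : bool := (u != v) && [forall z, e u z == e v z].

Definition twin_cover (S : {set V}) : bool :=
  [forall u, forall v, twins u v ==> (u \in S) || (v \in S)].

Definition min_twin_cover (S : {set V}) : Prop :=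
  twin_cover S /\ forall S' : {set V}, twin_cover S' -> #|S| <= #|S'|.

Definition isolated (v : V) : bool := [forall z, ~~ e v z].

End Graphs.

(* Generalized Mycielskian mu_t(G): vertex Some (s, v) is u_v^s (0 <= s <= t),
   with u_v^0 = v; vertex None is the root w. *)
Definition myc_vertex (V : finType) (t : nat) := option ('I_t.+1 * V).

Definition myc_rel (V : finType) (e : rel V) (t : nat) : rel (myc_vertex V t) :=
  fun a b =>
    match a, b with
    | Some (s, x), Some (r, y) =>
        ((nat_of_ord s == 0) && (nat_of_ord r == 0) && e x y)
        || (e x y && ((s.+1 == r :> nat) || (r.+1 == s :> nat)))
    | Some (s, _), None => nat_of_ord s == t
    | None, Some (r, _) => nat_of_ord r == t
    | None, None => false
    end.
Arguments myc_rel {V} e t.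

From mathcomp Require Import all_boot fingroup perm zify.
Set Implicit Arguments. Unset Strict Implicit. Unset Printing Implicit Defensive.

(* Write w for the root and (s, x) for the copy of x on level s.

   General facts first: a determining set contains a vertex of every pair of
   twins (a twin transposition is an automorphism), so it misses at most one
   isolated vertex, and a minimum twin cover misses exactly one.  Then the
   structure of mu_t(G): every automorphism fixes w (the only possible unique
   neighbour of a vertex, and the unique neighbour of the pendant (t, i0)),
   and an automorphism fixing w preserves the level of the copies of
   non-isolated vertices and restricts on level 0 to an automorphism of G.

   Upper bound: for a minimum determining set D of G, the copies of the
   isolated vertices other than (0, i0) and (t, i0), the copy of D on level 0
   and the copies of T on levels 1..t determine mu_t(G).
   Lower bound: a determining set S of mu_t(G) misses at most two copies of
   isolated vertices, contains on each level s >= 1 enough copies of twin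
   vertices to yield a twin cover with the isolated vertices of T, and its
   remaining copies give a determining set of G. *)

(* A permutation stabilising a class [Q] and fixing every member of [Q]
   except possibly [w] must fix [w] too: it has nowhere else to send it. *)
Lemma perm_fix_last (T : finType) (p : {perm T}) (Q : pred T) (w : T) :
  (forall v, Q v -> Q (p v)) -> (forall v, Q v -> v != w -> p v = v) ->
  Q w -> p w = w.
Proof.
move=> Qp fixQ Qw; apply/eqP; apply: contraT => pw_neq.
by have /perm_inj pw_eq := fixQ _ (Qp _ Qw) pw_neq; rewrite pw_eq eqxx in pw_neq.
Qed.

Section Automorphisms.
Variables (V : finType) (e : rel V).
Hypothesis simple_e : simple_graph e.

Lemma edge_sym x y : e x y = e y x.
Proof. by case: simple_e => sym _; rewrite sym. Qed.

Lemma autP (p : {perm V}) :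
  reflect (forall x y, e (p x) (p y) = e x y) (is_aut e p).
Proof.
apply: (iffP forallP) => [autp x y | autp x].
  by apply/eqP; move/forallP: (autp x); apply.
by apply/forallP => y; rewrite autp.
Qed.

Lemma aut_edgeV (p : {perm V}) x y : is_aut e p -> e (p x) y = e x (p^-1%g y).
Proof. by rewrite -{1}(permKV p y) => /autP ->. Qed.

Lemma aut_inv (p : {perm V}) : is_aut e p -> is_aut e p^-1%g.
Proof. by move=> autp; apply/autP => x y; rewrite -aut_edgeV // permKV. Qed.

Lemma determiningP (S : {set V}) :
  reflect (forall p, is_aut e p -> {in S, forall x, p x = x} -> p = 1%g)
          (determining e S).
Proof.
apply: (iffP forallP) => [detS p autp fixS | detS p].
  by apply/eqP; move/implyP/(_ autp)/implyP: (detS p); apply; apply/forall_inP => x /fixS ->.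
apply/implyP => autp; apply/implyP => /forall_inP fixS; apply/eqP.
by apply: detS => // x /fixS/eqP.
Qed.

Lemma determiningT : determining e setT.
Proof. by apply/determiningP => p _ fixT; apply/permP => x; rewrite fixT ?inE ?perm1. Qed.

Lemma det_number_min (S : {set V}) : determining e S -> det_number e <= #|S|.
Proof.
by rewrite /det_number; case: arg_minnP => [|S0 _]; [exact: determiningT | apply].
Qed.

Lemma det_number_attained : exists2 S, determining e S & #|S| = det_number e.
Proof.
by rewrite /det_number; case: arg_minnP => [|S0 detS0 _]; [exact: determiningT | exists S0].
Qed.

Lemma twinsP x y : reflect (x != y /\ forall z, e x z = e y z) (twins e x y).
Proof.
apply: (iffP andP) => [[xy /forallP same] | [xy same]]; split => //.
  by move=> z; apply/eqP.
by apply/forallP => z; rewrite same.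
Qed.

Lemma twins_sym x y : twins e x y -> twins e y x.
Proof. by case/twinsP => xy same; apply/twinsP; split=> [|z]; rewrite 1?eq_sym ?same. Qed.

Lemma twins_isolated x y : twins e x y -> isolated e x = isolated e y.
Proof. by case/twinsP => _ same; apply: eq_forallb => z; rewrite same. Qed.

Lemma isolated_twins x y :
  isolated e x -> isolated e y -> x != y -> twins e x y.
Proof.
move=> /forallP isox /forallP isoy xy; apply/twinsP; split=> // z.
by rewrite (negbTE (isox z)) (negbTE (isoy z)).
Qed.

Lemma twins_tperm_aut x y : twins e x y -> is_aut e (tperm x y).
Proof.
case/twinsP => _ same; case: simple_e => sym irr.
have same' z : e z x = e z y by rewrite sym same sym.
apply/autP => a b.
by case: tpermP => [->|->|]; case: tpermP => [->|->|] => *;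
  rewrite ?same ?same' ?irr //; subst; rewrite ?same ?same'.
Qed.

Lemma determining_twin_cover (S : {set V}) : determining e S -> twin_cover e S.
Proof.
move=> /determiningP detS; apply/forallP => x; apply/forallP => y.
apply/implyP => tw; apply: contraT; rewrite negb_or => /andP[xS yS].
have tp1 : tperm x y = 1%g.
  apply: detS (twins_tperm_aut tw) _ => z zS; apply: tpermD.
  - by apply: contraNneq xS => ->.
  - by apply: contraNneq yS => ->.
by case/twinsP: tw; rewrite -{1}(tpermL x y) tp1 perm1 eqxx.
Qed.

Lemma twin_coverP (S : {set V}) x y :
  twin_cover e S -> twins e x y -> (x \in S) || (y \in S).
Proof. by move=> /forallP/(_ x)/forallP/(_ y)/implyP; apply. Qed.

Lemma aut_isolated (p : {perm V}) x : is_aut e p -> isolated e (p x) = isolated e x.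
Proof.
move=> autp; apply/forallP/forallP => iso z; last by rewrite aut_edgeV.
by rewrite -(autP _ autp).
Qed.

Lemma aut_twins (p : {perm V}) x y : is_aut e p -> twins e x y -> twins e (p x) (p y).
Proof.
move=> autp /twinsP[xy same]; apply/twinsP; split; first by rewrite (inj_eq perm_inj).
by move=> z; rewrite !aut_edgeV.
Qed.

Definition has_twin (x : V) : bool := [exists y, twins e x y].

Lemma aut_has_twin (p : {perm V}) x : is_aut e p -> has_twin (p x) = has_twin x.
Proof.
move=> autp; apply/existsP/existsP => [[y tw] | [y tw]]; last by exists (p y); apply: aut_twins.
by exists (p^-1%g y); rewrite -(permK p x); apply: aut_twins (aut_inv autp) tw.
Qed.

Definition isolated_set : {set V} := [set x | isolated e x].

Lemma twin_cover_family (A : finType) (f : A -> V) (C : {set A}) (S : {set V}) :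
  twin_cover e S -> {in C &, forall a b, a != b -> twins e (f a) (f b)} ->
  #|[set a in C | f a \notin S]| <= 1.
Proof.
move=> coverS tw; apply/card_le1_eqP => a b; rewrite !inE => /andP[aC aS] /andP[bC bS].
case: (eqVneq a b) => // ab.
by move: (twin_coverP coverS (tw a b aC bC ab)); rewrite (negbTE aS) (negbTE bS).
Qed.

(* Isolated vertices are pairwise twins, so a twin cover misses at most one. *)
Lemma twin_cover_isolated (S : {set V}) : twin_cover e S -> #|isolated_set :\: S| <= 1.
Proof.
move=> coverS; have := @twin_cover_family _ id isolated_set S coverS.
rewrite (_ : [set x in _ | _] = isolated_set :\: S); last first.
  by apply/setP => x; rewrite !inE andbC.
by apply=> x y; rewrite !inE; exact: isolated_twins.
Qed.

(* A minimum twin cover misses exactly one isolated vertex, if there is any: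
   removing an isolated vertex from a cover containing all of them leaves a
   cover. *)
Lemma min_twin_cover_isolated (T : {set V}) i :
  isolated e i -> min_twin_cover e T -> #|isolated_set :\: T| = 1.
Proof.
move=> isoi [coverT minT]; apply/eqP; rewrite eqn_leq twin_cover_isolated // lt0n.
apply/negP => /eqP/cards0_eq/eqP; rewrite setD_eq0 => /subsetP isoT.
have iT : i \in T by apply: isoT; rewrite inE.
suff /minT : twin_cover e (T :\ i) by rewrite (cardsD1 i T) iT; lia.
apply/forallP => x; apply/forallP => y; apply/implyP => tw.
have /twinsP[xy _] := tw; have iso_xy := twins_isolated tw.
rewrite !inE; case: (eqVneq x i) => [xi | xi].
  have yT : y \in T by apply: isoT; rewrite inE -iso_xy xi.
  by rewrite (eq_sym y) -xi xy yT orbT.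
case: (eqVneq y i) => [yi | yi].
  have xT : x \in T by apply: isoT; rewrite inE iso_xy yi.
  by rewrite xT.
exact: twin_coverP coverT tw.
Qed.
End Automorphisms.

Lemma card_pairs_fibers (A B : finType) (Z : {set A * B}) :
  #|Z| = \sum_(a : A) #|[set b | (a, b) \in Z]|.
Proof.
transitivity (\sum_(a : A) \sum_(b | (a, b) \in Z) 1).
  by rewrite pair_big_dep -sum1_card; apply: eq_bigl => -[].
by apply: eq_bigr => a _; rewrite -sum1_card; apply: eq_bigl => b; rewrite inE.
Qed.

Lemma card_split3 (T : finType) (W : {set T}) (P Q : pred T) :
  #|W| = #|[set x in W | P x]| + #|[set x in W | ~~ P x & Q x]|
         + #|[set x in W | ~~ P x & ~~ Q x]|.
Proof.
rewrite -!sum1_card (bigID P) /= -addnA; congr (_ + _).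
  by apply: eq_bigl => x; rewrite inE.
rewrite (bigID Q) /=; congr (_ + _); apply: eq_bigl => x; rewrite !inE; case: (x \in W) => //.
Qed.

Section Mycielskian.
Variables (V : finType) (e : rel V) (t : nat).
Hypothesis simple_e : simple_graph e.

Local Notation M := (myc_vertex V t).
Local Notation m := (myc_rel e t).

Lemma myc_simple : simple_graph m.
Proof.
case: simple_e => sym irr; split; last by move=> [[s x]|] //=; rewrite irr andbF.
move=> [[s x]|] [[r y]|] //=; rewrite (sym x y).
by case: (e y x); rewrite /= ?andbT ?andbF //; congr (_ || _);
  [rewrite andbC | rewrite orbC].
Qed.

Lemma myc_edge_base (s r : 'I_t.+1) x y :
  s = 0 :> nat -> r = 0 :> nat -> m (Some (s, x)) (Some (r, y)) = e x y.
Proof. by move=> /= -> ->; rewrite andbF orbF. Qed.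

Lemma myc_edge_up (s r : 'I_t.+1) x y :
  r = s.+1 :> nat -> m (Some (s, x)) (Some (r, y)) = e x y.
Proof. by move=> /= ->; rewrite eqxx andbT andbF; case: (e x y). Qed.

Lemma myc_edge_down (s r : 'I_t.+1) x y :
  r = s.-1 :> nat -> e x y -> m (Some (s, x)) (Some (r, y)).
Proof. by case: s r => [[|s] ?] [r ?] /= -> ->; rewrite /= ?eqxx ?orbT. Qed.

Lemma myc_edge_levels (s r : 'I_t.+1) x y : m (Some (s, x)) (Some (r, y)) ->
  e x y /\ [\/ s.+1 = r :> nat, r.+1 = s :> nat | s = 0 :> nat /\ r = 0 :> nat].
Proof.
rewrite /=; case exy: (e x y); rewrite ?andbF //= andbT.
by case/orP => [/andP[/eqP s0 /eqP r0] | /orP[] /eqP]; split; constructor.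
Qed.

Lemma myc_edge_isolated (s r : 'I_t.+1) x y :
  isolated e x -> m (Some (s, x)) (Some (r, y)) = false.
Proof. by move=> /forallP/(_ y)/negbTE /= ->; rewrite andbF. Qed.

Lemma myc_twins (s : 'I_t.+1) x y :
  twins e x y -> twins m (Some (s, x)) (Some (s, y)).
Proof.
case/twinsP => xy same; apply/twinsP; split; first by rewrite (inj_eq Some_inj) xpair_eqE eqxx.
by case=> [[r z]|] //=; rewrite same.
Qed.

Lemma myc_isolated_twins (s r : 'I_t.+1) x y :
  isolated e x -> isolated e y -> (s == t :> nat) = (r == t :> nat) ->
  (s, x) != (r, y) -> twins m (Some (s, x)) (Some (r, y)).
Proof.
move=> isox isoy lvl sxry; apply/twinsP; split; first by rewrite (inj_eq Some_inj).
by case=> [[r' z]|] //; rewrite !myc_edge_isolated.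
Qed.

Definition inner (v : M) : bool := if v is Some (_, x) then ~~ isolated e x else false.

Lemma inner_neighbour (s : 'I_t.+1) x :
  inner (Some (s, x)) = [exists z, (z != None) && m (Some (s, x)) z].
Proof.
apply/idP/existsP => [/forallPn[y /negbNE exy] | [[[r y]|] //= /myc_edge_levels[exy _]]].
  have Hs : s.-1 < t.+1 by case: s => s /= ?; lia.
  by exists (Some (Ordinal Hs, y)); exact: myc_edge_down.
by apply/forallPn; exists y; rewrite negbK.
Qed.

Lemma aut_root_inv (p : {perm M}) : p None = None -> p^-1%g None = None.
Proof. by move=> p_root; rewrite -{1}p_root permK. Qed.

Lemma aut_Some (p : {perm M}) (s : 'I_t.+1) x :
  p None = None -> exists s' x', p (Some (s, x)) = Some (s', x').
Proof.
move=> p_root; case E: (p _) => [[s' x']|]; first by exists s', x'.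
by move: E; rewrite -p_root => /perm_inj.
Qed.

Lemma aut_inner (p : {perm M}) (v : M) :
  is_aut m p -> p None = None -> inner (p v) = inner v.
Proof.
move=> autp p_root; case: v => [[s x]|]; last by rewrite p_root.
have [s' [x' E]] := aut_Some s x p_root; rewrite E !inner_neighbour -E.
apply/existsP/existsP => [[z /andP[zN Ez]] | [z /andP[zN Ez]]].
  exists (p^-1%g z); rewrite -(aut_edgeV _ _ autp) Ez andbT.
  by apply: contra zN => /eqP pz; rewrite -(permKV p z) pz p_root.
by exists (p z); rewrite (autP _ _ autp) Ez andbT -p_root (inj_eq perm_inj).
Qed.

(* Induction downwards from level [t], whose vertices
   are the neighbours of the root: a vertex of level [s < t] is adjacent to an
   inner vertex of level [s+1], so its image has level [s] or [s+2], and the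
   latter is excluded by applying the induction hypothesis to [p^-1]. *)
Lemma aut_level (p : {perm M}) (s s' : 'I_t.+1) x x' :
  is_aut m p -> p None = None -> ~~ isolated e x ->
  p (Some (s, x)) = Some (s', x') -> s' = s.
Proof.
move Edist : (t - s) => n; elim/ltn_ind: n p s s' x x' Edist.
move=> n IH p s s' x x' Edist autp p_root nisox E.
apply: val_inj => /=; case: (ltnP s t) => [st | ts]; last first.
  have : m None (Some (s', x')).
    by rewrite -p_root -E (autP _ _ autp) /=; have := ltn_ord s; lia.
  by rewrite /= => /eqP ->; have := ltn_ord s; lia.
have [y exy] : exists y, e x y by move/forallPn: nisox => [y /negbNE]; exists y.
have nisoy : ~~ isolated e y by apply/forallPn; exists x; rewrite negbK edge_sym.
have Hs1 : s.+1 < t.+1 by [].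
have [r [y' E']] := aut_Some (Ordinal Hs1) y p_root.
have r_eq := IH (t - s.+1) ltac:(lia) p (Ordinal Hs1) r y y' erefl autp p_root nisoy E'.
have : m (Some (s', x')) (Some (r, y')) by rewrite -E -E' (autP _ _ autp) myc_edge_up.
case/myc_edge_levels => _; rewrite r_eq /= => -[| rs' | []]; try lia.
have nisox' : ~~ isolated e x'.
  by have := aut_inner (Some (s, x)) autp p_root; rewrite E /= => ->.
have Einv : p^-1%g (Some (s', x')) = Some (s, x) by rewrite -E permK.
have := IH (t - s') ltac:(lia) _ s' s x' x erefl (aut_inv autp) (aut_root_inv p_root).
move/(_ nisox' Einv).
by move/(congr1 val) => /=; lia.
Qed.

Lemma aut_copy (p : {perm M}) (s : 'I_t.+1) x : is_aut m p -> p None = None ->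
  ~~ isolated e x -> exists2 x', p (Some (s, x)) = Some (s, x') & ~~ isolated e x'.
Proof.
move=> autp p_root nisox; have [s' [x' E]] := aut_Some s x p_root.
have s's := aut_level autp p_root nisox E; subst s'.
by exists x' => //; have := aut_inner (Some (s, x)) autp p_root; rewrite E /= => ->.
Qed.

Definition pendant (v : M) : bool := [forall a, m v a == (a == None)].

Lemma pendantP (v : M) :
  pendant v -> exists2 x, v = Some (ord_max, x) & isolated e x.
Proof.
move/forallP => nbhd; case: v nbhd => [[s x]|] nbhd; last by move: (nbhd None).
have st : s = ord_max by apply: val_inj; move: (nbhd None) => /= /eqP/eqP.
exists x; first by rewrite st.
apply/forallP => y; apply/negP => exy.
have Hs : s.-1 < t.+1 by have := ltn_ord s; lia.
by move: (nbhd (Some (Ordinal Hs, y))); rewrite myc_edge_down.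
Qed.

Lemma level0_aut (p : {perm M}) : is_aut m p -> p None = None ->
  exists2 g : {perm V}, is_aut e g &
    forall x, if isolated e x then g x = x else p (Some (ord0, x)) = Some (ord0, g x).
Proof.
move=> autp p_root.
pose base x := if p (Some (ord0, x)) is Some (_, y) then y else x.
have baseE x : ~~ isolated e x ->
    p (Some (ord0, x)) = Some (ord0, base x) /\ ~~ isolated e (base x).
  by move=> nisox; have [y E nisoy] := aut_copy ord0 autp p_root nisox; rewrite /base E.
pose gf x := if isolated e x then x else base x.
have gf_inj : injective gf.
  move=> x y; rewrite /gf.
  case: (boolP (isolated e x)) => isox; case: (boolP (isolated e y)) => isoy.
  - by [].
  - by move=> xE; move: (baseE y isoy).2; rewrite -xE isox.
  - by move=> yE; move: (baseE x isox).2; rewrite yE isoy.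
  move=> E; suff [] : Some (ord0, x) = Some (ord0, y) :> M by [].
  apply: (@perm_inj _ p).
  by rewrite (baseE x isox).1 (baseE y isoy).1 E.
exists (perm gf_inj) => [|x]; last first.
  by rewrite permE /gf; case: (boolP (isolated e x)) => // nisox; exact: (baseE x nisox).1.
apply/autP => x y; rewrite !permE /gf.
case: (boolP (isolated e x)) => [/forallP isox | nisox].
  by rewrite !(negbTE (isox _)).
case: (boolP (isolated e y)) => [/forallP isoy | nisoy].
  by rewrite !(edge_sym simple_e _ y) !(negbTE (isoy _)).
rewrite -(@myc_edge_base ord0 ord0) // -(baseE x nisox).1 -(baseE y nisoy).1.
by rewrite (autP _ _ autp) myc_edge_base.
Qed.

Variables (u0 v0 : V).
Hypothesis u0v0 : u0 != v0.

(* Only the root can be the unique neighbour of a vertex: the root has the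
   two neighbours [(t, u0)] and [(t, v0)], and a copy of a non-isolated vertex
   has a neighbour one level down and another one level up (or the root). *)
Lemma unique_neighbour_root (v z : M) : (forall a, m v a = (a == z)) -> z = None.
Proof.
case: v => [[s x]|] nbhd; last first.
  move: (nbhd (Some (ord_max, u0))) (nbhd (Some (ord_max, v0))); rewrite /= eqxx.
  by move=> /esym/eqP <- /esym/eqP [] vu; move: u0v0; rewrite vu eqxx.
case: (boolP (isolated e x)) => [isox | /forallPn[y /negbNE exy]].
  case: z nbhd => [[r y] nbhd | //].
  by move: (nbhd (Some (r, y))); rewrite myc_edge_isolated ?eqxx.
have Hs : s.-1 < t.+1 by have := ltn_ord s; lia.
have /esym/eqP down := nbhd (Some (Ordinal Hs, y)); rewrite myc_edge_down // in down.
case: (ltnP s t) => [st | ts].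
  have Hs1 : s.+1 < t.+1 by [].
  move: (nbhd (Some (Ordinal Hs1, y))); rewrite myc_edge_up // exy -down.
  by move=> /esym/eqP [] /=; lia.
by apply/eqP; rewrite eq_sym -nbhd /=; have := ltn_ord s; lia.
Qed.

Variable i0 : V.
Hypothesis isolated_i0 : isolated e i0.

Lemma myc_isolatedP (v : M) : isolated m v ->
  exists s x, [/\ v = Some (s, x), s != t :> nat & isolated e x].
Proof.
move/forallP => nbhd; case: v nbhd => [[s x]|] nbhd; last first.
  by move: (nbhd (Some (ord_max, i0))); rewrite /= eqxx.
have st : s != t :> nat by move: (nbhd None).
exists s, x; split=> //; apply/forallP => y; apply/negP => exy.
have Hs : s.+1 < t.+1 by rewrite ltnS ltn_neqAle st -ltnS ltn_ord.
by move: (nbhd (Some (Ordinal Hs, y))); rewrite myc_edge_up ?exy.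
Qed.

(* Every automorphism fixes the root, the unique neighbour of the pendant
   vertex [(t, i0)]. *)
Lemma aut_fix_root (p : {perm M}) : is_aut m p -> p None = None.
Proof.
move=> autp; apply: (@unique_neighbour_root (p (Some (ord_max, i0)))) => a.
have leaf b : m (Some (ord_max, i0)) b = (b == None).
  by case: b => [[r y]|]; rewrite ?myc_edge_isolated //= eqxx.
by rewrite aut_edgeV // leaf -(inj_eq (@perm_inj _ p)) permKV.
Qed.
End Mycielskian.

Section UpperBound.
Variables (V : finType) (e : rel V) (t : nat).
Hypotheses (simple_e : simple_graph e) (t_pos : 0 < t).
Variables (u0 v0 i0 : V).
Hypotheses (u0v0 : u0 != v0) (isolated_i0 : isolated e i0).
Variables (D T : {set V}).
Hypotheses (detD : determining e D) (coverT : twin_cover e T).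

Local Notation M := (myc_vertex V t).
Local Notation m := (myc_rel e t).
Local Notation iso := (isolated_set e).

(* The two copies of [i0] left out of the determining set below. *)
Definition corner_pairs : {set 'I_t.+1 * V} := [set (ord0, i0); (ord_max, i0)].

Definition upper_pairs : {set 'I_t.+1 * V} :=
  (setX setT iso :\: corner_pairs)
  :|: setX [set ord0] (D :\: iso) :|: setX (~: [set ord0]) (T :\: iso).

(* Its size; the two corners are distinct since [t > 0]. *)
Lemma upper_pairs_card :
  #|upper_pairs| <= (t.+1 * #|iso| - 2) + #|D :\: iso| + t * #|T :\: iso|.
Proof.
have two_corners : #|corner_pairs| = 2.
  by rewrite cards2 xpair_eqE negb_and -val_eqE /= eq_sym -lt0n t_pos.
have corners_iso : corner_pairs \subset setX setT iso.
  by apply/subsetP => q; rewrite !inE => /orP[] /eqP -> /=; rewrite isolated_i0.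
apply: leq_trans (leq_card_setU _ _) _; apply: leq_add; last first.
  by rewrite cardsX cardsC1 card_ord.
apply: leq_trans (leq_card_setU _ _) _; apply: leq_add; last first.
  by rewrite cardsX cards1 mul1n.
by rewrite cardsD (setIidPr corners_iso) two_corners cardsX cardsT card_ord.
Qed.

Section FixingAutomorphism.
Variable p : {perm M}.
Hypotheses (autp : is_aut m p) (fix_upper : {in upper_pairs, forall q, p (Some q) = Some q}).

Let p_root : p None = None := aut_fix_root u0v0 isolated_i0 autp.

(* Level 0: the induced automorphism of [G] fixes [D], hence is trivial. *)
Lemma upper_fix_level0 x : ~~ isolated e x -> p (Some (ord0, x)) = Some (ord0, x).
Proof.
move=> nisox; have [g autg gE] := level0_aut simple_e autp p_root.
have g1 : g = 1%g.
  apply: (determiningP _ _ detD) => // y yD; move: (gE y).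
  case: ifPn => // nisoy; rewrite fix_upper => [[] //|].
  by rewrite !inE /= yD (negbTE nisoy) andbF.
by move: (gE x); rewrite (negbTE nisox) g1 perm1.
Qed.

(* Higher levels, by induction: if level [s] is fixed, the image [(s+1, x')]
   of [(s+1, x)] has the neighbours of [(s+1, x)] on level [s], so [x'] and
   [x] are equal or twins; in the latter case one of them lies in [T], and
   its copy on level [s+1] is fixed by [p]. *)
Lemma upper_fix_inner (s : 'I_t.+1) x : ~~ isolated e x -> p (Some (s, x)) = Some (s, x).
Proof.
move Es : (nat_of_ord s) => n; elim: n s Es x => [|n IH] s Es x nisox.
  have -> : s = ord0 by apply: val_inj.
  exact: upper_fix_level0.
have Hn : n < t.+1 by have := ltn_ord s; lia.
have [x' E nisox'] := aut_copy simple_e s autp p_root nisox.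
have same z : e x' z = e x z.
  case: (boolP (isolated e z)) => [/forallP isoz | nisoz].
    by rewrite !(edge_sym simple_e _ z) !(negbTE (isoz _)).
  rewrite !(edge_sym simple_e _ z) -!(@myc_edge_up _ e t (Ordinal Hn) s) // -E.
  by rewrite -{1}(IH (Ordinal Hn) erefl z nisoz) (autP _ _ autp).
have [x'_eq | x'x] := eqVneq x' x; first by rewrite E x'_eq.
have tw : twins e x x' by apply/twinsP; split=> [|z]; rewrite 1?eq_sym ?same.
have in_upper y : y \in T -> ~~ isolated e y -> (s, y) \in upper_pairs.
  by move=> yT nisoy; rewrite !inE /= yT nisoy (negbTE nisoy) -val_eqE /= Es !orbT.
case/orP: (twin_coverP coverT tw) => [xT | x'T]; first exact: fix_upper (in_upper _ xT nisox).
have := fix_upper (in_upper _ x'T nisox'); rewrite -{2}E => /perm_inj [] x'_eq.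
by move: x'x; rewrite x'_eq eqxx.
Qed.

(* Copies of isolated vertices: all are fixed by hypothesis except the two
   corners; [(0, i0)] is the only isolated vertex of the Mycielskian not fixed
   by hypothesis, and [(t, i0)] the only pendant vertex not fixed by
   hypothesis, so both are fixed as well. *)
Lemma upper_fix_isolated (s : 'I_t.+1) x : isolated e x -> p (Some (s, x)) = Some (s, x).
Proof.
have fix_off_corner (r : 'I_t.+1) y : isolated e y -> (r, y) \notin corner_pairs ->
    p (Some (r, y)) = Some (r, y).
  move=> isoy off; apply: fix_upper.
  by rewrite /upper_pairs !in_setU in_setD off in_setX !inE isoy.
move=> isox; case: (boolP ((s, x) \in corner_pairs)); last exact: fix_off_corner.
case/set2P => -[-> ->].
  apply: (@perm_fix_last _ p (isolated m)) => [v | v | ].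
  - by rewrite aut_isolated.
  - case/(myc_isolatedP i0) => r [y [-> rt isoy]] off; apply: fix_off_corner => //.
    by rewrite !inE negb_or -(inj_eq (@Some_inj _)) off xpair_eqE negb_and -val_eqE /= rt.
  - by apply/forallP => -[[r y]|]; rewrite ?myc_edge_isolated //= eq_sym -lt0n t_pos.
apply: (@perm_fix_last _ p (pendant (t:=t) e)) => [v | v | ].
- move=> /forallP nbhd; apply/forallP => a; rewrite aut_edgeV // (eqP (nbhd _)).
  by rewrite -(inj_eq (@perm_inj _ p)) permKV p_root.
- case/pendantP => y -> isoy off; apply: fix_off_corner => //.
  rewrite !inE negb_or xpair_eqE negb_and -val_eqE /= -lt0n t_pos /=.
  by apply: contra off => /eqP ->.
- by apply/forallP => -[[r y]|]; rewrite ?myc_edge_isolated //= eqxx.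
Qed.
End FixingAutomorphism.

Lemma upper_determining : determining m (Some @: upper_pairs).
Proof.
apply/determiningP => p autp fixS.
have fix_upper : {in upper_pairs, forall q, p (Some q) = Some q}.
  by move=> q qU; apply: fixS; exact: imset_f.
apply/permP => -[[s x]|]; rewrite perm1; last first.
  exact: (aut_fix_root (t:=t) u0v0 isolated_i0 autp).
case: (boolP (isolated e x)) => [isox | nisox]; first exact: upper_fix_isolated.
exact: upper_fix_inner.
Qed.
End UpperBound.

Section LowerBound.
Variables (V : finType) (e : rel V) (t : nat).
Hypothesis simple_e : simple_graph e.
Variable S : {set myc_vertex V t}.
Hypothesis detS : determining (myc_rel e t) S.

Local Notation M := (myc_vertex V t).
Local Notation m := (myc_rel e t).
Local Notation iso := (isolated_set e).

Let coverS : twin_cover m S := determining_twin_cover (myc_simple t simple_e) detS.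

Definition trace_pairs : {set 'I_t.+1 * V} := [set q | Some q \in S].

(* Copies in [S] of vertices with a twin on the levels [1..t]; all other
   copies of non-isolated vertices in [S] are accounted for by [trace_set]. *)
Definition twin_copy (q : 'I_t.+1 * V) : bool := (q.1 != ord0) && has_twin e q.2.

(* [S] misses at most one isolated vertex and at most one pendant vertex of
   the Mycielskian, so at most two copies of isolated vertices. *)
Lemma lower_isolated : t.+1 * #|iso| - 2 <= #|[set q in trace_pairs | isolated e q.2]|.
Proof.
pose copies (top : bool) := [set q : 'I_t.+1 * V | isolated e q.2 & (q.1 == t :> nat) == top].
have missed top : #|[set q in copies top | Some q \notin S]| <= 1.
  apply: twin_cover_family coverS _ => -[s x] [r y]; rewrite !inE /=.
  move=> /andP[isox /eqP lvlx] /andP[isoy /eqP lvly] sxry.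
  by apply: myc_isolated_twins; rewrite ?lvlx ?lvly.
pose all_copies := [set q : 'I_t.+1 * V | isolated e q.2].
have card_all : #|all_copies| = t.+1 * #|iso|.
  have -> : all_copies = setX setT iso by apply/setP => -[s x]; rewrite !inE.
  by rewrite cardsX cardsT card_ord.
have card_missed : #|all_copies :\: trace_pairs| <= 2.
  apply: leq_trans (leq_add (missed true) (missed false)).
  apply: leq_trans (leq_card_setU _ _); apply: subset_leq_card; apply/subsetP => q.
  by rewrite /trace_pairs !inE => /andP[-> ->]; case: (q.1 == t :> nat).
suff : #|all_copies| <=
    #|[set q in trace_pairs | isolated e q.2]| + #|all_copies :\: trace_pairs|.
  by rewrite card_all; lia.
apply: leq_trans (leq_card_setU _ _); apply: subset_leq_card; apply/subsetP => q.
by rewrite /trace_pairs !inE => ->; rewrite andbT; case: (Some q \in S).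
Qed.

Section TwinCopies.
Variable T : {set V}.
Hypothesis minT : min_twin_cover e T.

(* On every level [s], the copies in [S] of non-isolated vertices having a
   twin, together with the isolated vertices of [T], form a twin cover of [G];
   by minimality of [T], there are at least [#|T :\: iso|] of them. *)
Lemma lower_level (s : 'I_t.+1) :
  #|T :\: iso| <= #|[set x | [&& Some (s, x) \in S, ~~ isolated e x & has_twin e x]]|.
Proof.
case: minT => coverT minimal; set F := [set x | _].
have cover : twin_cover e (F :|: (T :&: iso)).
  apply/forallP => u; apply/forallP => v; apply/implyP => tw.
  have iso_uv := twins_isolated tw.
  case: (boolP (isolated e u)) => [isou | nisou].
    by case/orP: (twin_coverP coverT tw) => [uT | vT]; rewrite !inE ?uT ?vT -?iso_uv isou ?orbT.
  have hu : has_twin e u by apply/existsP; exists v.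
  have hv : has_twin e v by apply/existsP; exists u; exact: twins_sym.
  rewrite !inE -iso_uv (negbTE nisou) hu hv /= !andbT !andbF !orbF.
  exact: twin_coverP coverS (myc_twins s tw).
have := minimal _ cover; have := cardsUI F (T :&: iso); have := cardsID iso T; lia.
Qed.

Lemma lower_twin_copies :
  t * #|T :\: iso| <= #|[set q in trace_pairs | ~~ isolated e q.2 & twin_copy q]|.
Proof.
rewrite card_pairs_fibers big_ord_recl -[X in X <= _]add0n leq_add //.
have -> : t * #|T :\: iso| = \sum_(s < t) #|T :\: iso| by rewrite sum_nat_const card_ord.
apply: leq_sum => s _.
apply: leq_trans (lower_level (lift ord0 s)) _; apply: subset_leq_card; apply/subsetP => x.
by rewrite !inE /twin_copy.
Qed.
End TwinCopies.

Section Trace.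
Variable i0 : V.
Hypothesis isolated_i0 : isolated e i0.

Definition trace_set : {set V} :=
  [set x | ~~ isolated e x &&
     ((Some (ord0, x) \in S) || ~~ has_twin e x && [exists s, Some (s, x) \in S])]
  :|: (iso :\ i0).

Section TraceAutomorphism.
Variable g : {perm V}.
Hypotheses (autg : is_aut e g) (fix_trace : {in trace_set, forall x, g x = x}).

(* [g] fixes the isolated vertices other than [i0], hence also [i0]. *)
Lemma trace_fix_isolated x : isolated e x -> g x = x.
Proof.
have fix_iso y : isolated e y -> y != i0 -> g y = y.
  by move=> isoy yi0; apply: fix_trace; rewrite !inE yi0 isoy orbT.
move=> isox; case: (eqVneq x i0) => [-> | xi0]; last exact: fix_iso.
by apply: (perm_fix_last (Q := isolated e)) => // v; rewrite aut_isolated.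
Qed.

(* A vertex with a twin is mapped to a vertex with the same neighbourhood:
   the copies on level 0 of two twins are twins, so one of them is in [S]
   and the corresponding twin is fixed by [g]. *)
Lemma trace_twin_neighbours x z : has_twin e x -> e (g x) z = e x z.
Proof.
case/existsP => y tw; have /twinsP[xy same] := tw.
case: (boolP (isolated e x)) => [isox | nisox]; first by rewrite trace_fix_isolated.
have nisoy : ~~ isolated e y by rewrite -(twins_isolated tw).
case/orP: (twin_coverP coverS (myc_twins ord0 tw)) => inS.
  by rewrite fix_trace // !inE nisox inS.
by rewrite aut_edgeV // same -aut_edgeV // fix_trace ?same // !inE nisoy inS.
Qed.

Definition trace_level_map (s : 'I_t.+1) (x : V) : V :=
  if (s == ord0) || ~~ has_twin e x then g x else x.

Lemma trace_level_neighbours s x z : e (trace_level_map s x) z = e (g x) z.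
Proof.
rewrite /trace_level_map; case: ifPn => // /norP[_ /negbNE twx].
by rewrite trace_twin_neighbours.
Qed.

Lemma trace_level_inj s : injective (trace_level_map s).
Proof.
move=> x y; rewrite /trace_level_map; case: (s == ord0) => /=; first exact: perm_inj.
have twg := aut_has_twin _ autg.
case: (boolP (has_twin e x)) => twx; case: (boolP (has_twin e y)) => twy //= xy.
- by move: twx; rewrite xy twg (negbTE twy).
- by move: twy; rewrite -xy twg (negbTE twx).
- exact: perm_inj xy.
Qed.

Definition trace_lift (v : M) : M :=
  if v is Some (s, x) then Some (s, trace_level_map s x) else None.

Lemma trace_lift_inj : injective trace_lift.
Proof. by move=> [[s x]|] [[r y]|] //= [] <- /trace_level_inj ->. Qed.

Lemma trace_lift_aut : is_aut m (perm trace_lift_inj).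
Proof.
apply/autP => -[[s x]|] [[r y]|]; rewrite !permE //=.
rewrite trace_level_neighbours (edge_sym simple_e _ (trace_level_map _ _)).
by rewrite trace_level_neighbours (autP _ _ autg) (edge_sym simple_e y).
Qed.

Lemma trace_lift_fix : {in S, forall v, trace_lift v = v}.
Proof.
move=> [[s x]|] // inS; congr (Some (s, _)); rewrite /trace_level_map.
case: ifPn => // lvl; case: (boolP (isolated e x)) => [isox | nisox].
  exact: trace_fix_isolated.
apply: fix_trace; rewrite !inE nisox /=; case/orP: lvl => [/eqP s0 | ->].
  by rewrite -s0 inS.
by apply/orP; left; apply/orP; right; apply/existsP; exists s.
Qed.
End TraceAutomorphism.

Lemma trace_determining : determining e trace_set.
Proof.
apply/determiningP => g autg fixg; apply/permP => x; rewrite perm1.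
have lift1 : perm (trace_lift_inj autg) = 1%g.
  apply: (determiningP _ _ detS) => [|v inS]; first exact: trace_lift_aut.
  by rewrite permE; apply: trace_lift_fix.
by have := congr1 (fun q : {perm M} => q (Some (ord0, x))) lift1; rewrite permE perm1 => -[].
Qed.

Lemma trace_set_isolated : #|trace_set :&: iso| <= #|iso| - 1.
Proof.
have -> : trace_set :&: iso = iso :\ i0.
  by apply/setP => x; rewrite !inE; case: (isolated e x); rewrite ?andbT ?andbF ?orbF.
by rewrite (cardsD1 i0 iso) inE isolated_i0 add1n subn1.
Qed.

Lemma trace_set_inner :
  #|trace_set :\: iso| <= #|[set q in trace_pairs | ~~ isolated e q.2 & ~~ twin_copy q]|.
Proof.
apply: leq_trans (leq_imset_card snd _); apply: subset_leq_card; apply/subsetP => x.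
rewrite !inE => /andP[nisox]; rewrite (negbTE nisox) /= andbF orbF.
case/orP => [inS | /andP[notw /existsP[s inS]]].
  by apply/imsetP; exists (ord0, x); rewrite // !inE inS nisox /twin_copy eqxx.
by apply/imsetP; exists (s, x); rewrite // !inE inS nisox /twin_copy (negbTE notw) andbF.
Qed.
End Trace.

(* The lower bound: [S] has at least [(t+1)#|iso| - 2] copies of isolated
   vertices, [t #|T :\: iso|] twin copies, and as many other copies as
   [trace_set] has non-isolated vertices. *)
Lemma lower_bound (i0 : V) (T : {set V}) :
  isolated e i0 -> min_twin_cover e T -> exists2 A, determining e A &
  (t.+1 * #|iso| - 2) + #|A| + t * #|T :\: iso| <= #|S| + (#|iso| - 1).
Proof.
move=> isolated_i0 minT; exists (trace_set i0); first exact: trace_determining.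
have trace_S : #|trace_pairs| <= #|S|.
  rewrite -(card_imset _ (@Some_inj _)); apply: subset_leq_card.
  by apply/subsetP => v /imsetP[q]; rewrite inE => inS ->.
have := card_split3 trace_pairs (fun q => isolated e q.2) twin_copy.
have := lower_isolated; have := lower_twin_copies minT; have := trace_set_inner i0.
have := trace_set_isolated isolated_i0; have := cardsID iso (trace_set i0); lia.
Qed.
End LowerBound.

Section DeterminingNumber.
Variables (V : finType) (e : rel V) (T : {set V}) (t : nat).
Hypotheses (simple_e : simple_graph e) (minT : min_twin_cover e T) (t_pos : 0 < t).
Variable i0 : V.
Hypothesis isolated_i0 : isolated e i0.

Local Notation iso := (isolated_set e).

Let iso_T : #|iso| = #|iso :&: T| + 1.
Proof. by rewrite -(cardsID T iso) (min_twin_cover_isolated isolated_i0 minT). Qed.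

(* Upper bound, from [upper_determining] with [D] a minimum determining set
   of [G], which contains all isolated vertices but at most one. *)
Lemma myc_det_upper (u0 v0 : V) : u0 != v0 ->
  det_number (myc_rel e t) <= t * #|T| + det_number e + t - 1.
Proof.
move=> u0v0; have [D detD <-] := det_number_attained e.
have := det_number_min (upper_determining simple_e t_pos u0v0 isolated_i0 detD (proj1 minT)).
rewrite card_imset; last exact: Some_inj.
move/leq_trans/(_ (upper_pairs_card t_pos isolated_i0 D T)).
have := twin_cover_isolated (determining_twin_cover simple_e detD).
have := cardsID D iso; have := cardsID iso D.
rewrite iso_T mulSn mulnDr muln1 -(cardsID iso T) [T :&: _]setIC [D :&: _]setIC mulnDr; lia.
Qed.

Lemma myc_det_lower : t * #|T| + det_number e + t - 1 <= det_number (myc_rel e t).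
Proof.
have [S detS <-] := det_number_attained (myc_rel e t).
have [A detA] : exists2 A, determining e A &
    t.+1 * #|iso| - 2 + #|A| + t * #|T :\: iso| <= #|S| + (#|iso| - 1)
  := lower_bound simple_e detS isolated_i0 minT.
have := det_number_min detA.
rewrite iso_T mulSn mulnDr muln1 -(cardsID iso T) [T :&: _]setIC mulnDr; lia.
Qed.
End DeterminingNumber.

Theorem mainTheorem6 (V : finType) (e : rel V) (T : {set V}) (t : nat) :
  simple_graph e ->
  (exists u v, twins e u v) ->
  (exists v, isolated e v) ->
  min_twin_cover e T ->
  1 <= t ->
  det_number (myc_rel e t) = t * #|T| + det_number e + t - 1.
Proof.
move=> simple_e [u0 [v0 /twinsP[u0v0 _]]] [i0 isolated_i0] minT t_pos.
apply/eqP; rewrite eqn_leq (myc_det_upper simple_e minT t_pos isolated_i0 u0v0).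
by rewrite (myc_det_lower simple_e minT t_pos isolated_i0).
Qed.
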